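(* Let $k\ge2$ and $n\le0$. Then $\mathcal{F}_{n,k}(x)$ is the zero polynomial if and only if $q_{n,k}<r_{n,k}$. Equivalently, $\mathcal{F}_{n,k}\equiv0$ exactly when $|n|\in\{kq+q,\,kq+q+1,\dots,kq+k-2\}$ for some $q\in\{0,1,\dots,k-2\}$; this is a block of $k-q-1$ consecutive indices for each such $q$. In particular, $\mathcal{F}_{n,k}\not\equiv0$ whenever $|n|\ge k^2-k-1$, and there are exactly $k(k-1)/2$ indices $n\le0$ (the $k-1$ initial values included) for which $\mathcal{F}_{n,k}\equiv0$.
   Context: For $k\ge2$, the polynomials $\mathcal{F}_{n,k}(x)\in\mathbb{Z}[x]$ ($n\in\mathbb{Z}$) are defined by $\mathcal{F}_{1,k}=1$, $\mathcal{F}_{n,k}=0$ for $n=0,-1,\dots,-(k-2)$, and $\mathcal{F}_{n,k}(x)=\sum_{j=1}^{k}x^{k-j}\mathcal{F}_{n-j,k}(x)$ for all $n\in\mathbb{Z}$. This recurrence is used upwards for $n\ge2$, and downwards for $n\le-(k-1)$ as $\mathcal{F}_{n,k}=\mathcal{F}_{n+k,k}-\sum_{j=1}^{k-1}x^j\mathcal{F}_{n+j,k}$. For $n\le0$, set $q_{n,k}=\lfloor(|n|+1)/k\rfloor$ and let $r_{n,k}\in\{0,\dots,k-1\}$ be the residue of $|n|+1$ modulo $k$. Then $|n|+1=kq_{n,k}+r_{n,k}$. *)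

From mathcomp Require Import all_boot all_order all_algebra.
Set Implicit Arguments. Unset Strict Implicit. Unset Printing Implicit Defensive.
Import Order.TTheory GRing.Theory Num.Theory.
Local Open Scope ring_scope.

(* Downward values: Gseq k N = [:: G 0; ...; G (N-1)] with G m = F_{1-m,k}. *)
Fixpoint Gseq (k : nat) (N : nat) : seq {poly int} :=
  match N with
  | 0 => [::]
  | N'.+1 =>
    let s := Gseq k N' in
    let m := size s in
    rcons s (if m == 0%N then 1
             else if (m < k)%N then 0
             else nth 0 s (m - k) - \sum_(1 <= j < k) 'X^j * nth 0 s (m - j))
  end.

(* Upward values: Useq k N = [:: U 0; ...; U (N-1)] with U i = F_{i+2-k,k}. *)
Fixpoint Useq (k : nat) (N : nat) : seq {poly int} :=
  match N with
  | 0 => [::]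
  | N'.+1 =>
    let s := Useq k N' in
    let i := size s in
    rcons s (if (i < k.-1)%N then 0
             else if i == k.-1 then 1
             else \sum_(1 <= j < k.+1) 'X^(k - j) * nth 0 s (i - j))
  end.

Definition Fib (k : nat) (n : int) : {poly int} :=
  if (1 <= n)%R then nth 0 (Useq k (`|n| + k - 1)%N) (`|n| + k - 2)%N
  else nth 0 (Gseq k (`|n| + 2)%N) (`|n| + 1)%N.

Definition qnk (n : int) (k : nat) : nat := ((`|n| + 1) %/ k)%N.
Definition rnk (n : int) (k : nat) : nat := ((`|n| + 1) %% k)%N.

From mathcomp Require Import all_boot all_order all_algebra.
From mathcomp Require Import zify ring.
Import Order.TTheory GRing.Theory Num.Theory.
Local Open Scope ring_scope.

(* Write |n| + 1 = kq + r with r < k. The downward recurrence yields the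
   three-term relation F_(n-k) = (1 + x^k) F_n - x F_(n+1), and induction on q
   along it shows that F_n vanishes when q < r, while for q >= r its lowest
   term is (-1)^r C(q, r) x^r. What remains is arithmetic: q < r holds exactly
   on the blocks kq + q < |n| + 1 < kq + k, never once |n| + 1 >= k(k-1), and
   these blocks have k-1, k-2, ..., 1 elements. *)

Section Downward.

Variable k : nat.
Hypothesis k_gt0 : (0 < k)%N.

(* [Fdown m] is F_(1-m,k), see [Fib_nonpos]. *)
Definition Fdown (m : nat) : {poly int} := nth 0 (Gseq k m.+1) m.

Lemma size_Gseq N : size (Gseq k N) = N.
Proof. by elim: N => //= N IH; rewrite size_rcons IH. Qed.

Lemma nth_Gseq N m : (m < N)%N -> nth 0 (Gseq k N) m = Fdown m.
Proof.
elim: N => // N IH; rewrite ltnS leq_eqVlt => /orP[/eqP-> // | mN].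
by rewrite /= nth_rcons size_Gseq mN IH.
Qed.

Lemma FdownE m : Fdown m = if m == 0%N then 1 else if (m < k)%N then 0
  else Fdown (m - k) - \sum_(1 <= j < k) 'X^j * Fdown (m - j).
Proof.
rewrite {1}/Fdown /= nth_rcons size_Gseq ltnn eqxx.
case: eqP => // /eqP m_gt0; case: ltnP => // km.
rewrite nth_Gseq; last by lia.
by congr (_ - _); apply: eq_big_nat => j /andP[j_gt0 jk]; rewrite nth_Gseq //; lia.
Qed.

Lemma Fdown0 : Fdown 0 = 1.
Proof. by rewrite FdownE. Qed.

Lemma Fdown_small m : (0 < m < k)%N -> Fdown m = 0.
Proof. by case/andP=> m_gt0 mk; rewrite FdownE mk; case: eqP => //; lia. Qed.

(* The defining recurrence F_(p+k) = sum_(j < k) x^j F_(p+j), with p = 1-m-k. *)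
Lemma Fdown_sum m : \sum_(0 <= j < k) 'X^j * Fdown (m + k - j) = Fdown m.
Proof.
rewrite big_ltn // expr0 mul1r subn0 [Fdown (m + k)]FdownE addnK.
have -> : (m + k == 0)%N = false by lia.
by rewrite ltnNge leq_addl /= subrK.
Qed.

(* The sums in [Fdown_sum] at m and m+1 differ by a shift, so they telescope. *)
Lemma Fdown_rec m : Fdown (m + k).+1 = (1 + 'X^k) * Fdown m.+1 - 'X * Fdown m.
Proof.
have [k' def_k] : exists k', k = k'.+1 by exists k.-1; lia.
have shift : \sum_(0 <= j < k) 'X^j * Fdown (m.+1 + k - j) =
    Fdown (m + k).+1 + 'X * \sum_(0 <= j < k') 'X^j * Fdown (m + k - j).
  rewrite big_ltn // expr0 mul1r subn0 addSn big_add1 mulr_sumr def_k /=.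
  by congr (_ + _); apply: eq_big_nat => j _; rewrite exprS mulrA subSS.
have peel : \sum_(0 <= j < k) 'X^j * Fdown (m + k - j) =
    \sum_(0 <= j < k') 'X^j * Fdown (m + k - j) + 'X^k' * Fdown m.+1.
  by rewrite def_k big_nat_recr //= addnS subSn ?leq_addl // addnK.
move: shift peel; rewrite !Fdown_sum def_k exprS => -> ->; ring.
Qed.

Lemma coef0_Fdown_mulk q : (Fdown (k * q))`_0 = 1.
Proof.
elim: q => [|q IH]; first by rewrite muln0 Fdown0 coef1.
rewrite -IH -(Fdown_sum (k * q)) big_ltn // coefD coef_sum subn0 expr0 mul1r mulnS addnC.
rewrite big1_seq ?addr0 // => j /andP[_]; rewrite mem_index_iota => /andP[j_gt0 _].
by rewrite coefXnM j_gt0.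
Qed.

Lemma Fdown_eq0 q r : (q < r < k)%N -> Fdown (k * q + r) = 0.
Proof.
elim: q r => [|q IH] [|r] // /andP[qr rk]; first by rewrite muln0 Fdown_small.
have -> : (k * q.+1 + r.+1 = (k * q + r + k).+1)%N by rewrite mulnS; lia.
by rewrite Fdown_rec -addnS !IH ?mulr0 ?subr0 //; lia.
Qed.

Lemma coef_Fdown q r j : (r < k)%N -> (j <= r)%N ->
  (Fdown (k * q + r))`_j = if j == r then (-1) ^+ r * 'C(q, r)%:R else 0.
Proof.
elim: q r j => [|q IH] [|r] j rk jr.
- by move: jr; rewrite leqn0 => /eqP->; rewrite muln0 Fdown0 coef1.
- by rewrite muln0 Fdown_small // coef0 bin0n mulr0 if_same.
- by move: jr; rewrite leqn0 => /eqP->; rewrite addn0 coef0_Fdown_mulk bin0.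
have -> : (k * q.+1 + r.+1 = (k * q + r + k).+1)%N by rewrite mulnS; lia.
rewrite Fdown_rec coefB mulrDl mul1r coefD.
rewrite coefXnM coefXM (leq_ltn_trans jr rk) addr0 -addnS (IH r.+1 j rk jr).
case: j jr => [|j] jr; first by rewrite subr0.
rewrite (IH r j (ltnW rk) jr) /= eqSS binS natrD exprS.
by case: eqP => _; ring.
Qed.

Lemma Fdown_eq0P m : Fdown m = 0 <-> (m %/ k < m %% k)%N.
Proof.
have rk := ltn_pmod m k_gt0; rewrite {1}(divn_eq m k) mulnC.
split=> [Fm0 | qr]; last by apply: Fdown_eq0; rewrite qr rk.
rewrite ltnNge; apply/negP => rq.
move: (@coef_Fdown (m %/ k) _ _ rk (leqnn _)); rewrite Fm0 coef0 eqxx.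
by move/esym/eqP; rewrite mulf_eq0 signr_eq0 pnatr_eq0 eqn0Ngt bin_gt0 rq.
Qed.

End Downward.

Lemma Fib_nonpos k n : n <= 0 -> Fib k n = Fdown k (`|n| + 1).
Proof.
move=> n_le0; rewrite /Fib ifF; last by apply/negbTE; rewrite -ltNge; lia.
by rewrite nth_Gseq //; lia.
Qed.

Lemma sum_sub_ord_bin2 n : (\sum_(i < n) (n - i) = 'C(n.+1, 2))%N.
Proof.
elim: n => [|n IH]; first by rewrite big_ord0.
rewrite big_ord_recl subn0; under eq_bigr => i _ do rewrite lift0 subSS.
by rewrite IH [RHS]binS bin1 addnC.
Qed.

Section DivModCount.

Local Open Scope nat_scope.

Variable k : nat.
Hypothesis k_gt0 : 0 < k.

Lemma divn_lt_modnP m :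
  m %/ k < m %% k <-> exists q, k * q + q < m < k * q + k.
Proof.
have rk := ltn_pmod m k_gt0; have def_m := divn_eq m k; rewrite mulnC in def_m.
split=> [qr | [q /andP[lo hi]]]; first by exists (m %/ k); lia.
have def_q : m %/ k = q.
  apply/eqP; rewrite eqn_leq -ltnS ltn_divLR // leq_divRL //; lia.
by rewrite def_q; lia.
Qed.

Lemma modn_le_divn m : k * k.-1 <= m -> m %% k <= m %/ k.
Proof.
move=> km; rewrite -ltnS (leq_trans (ltn_pmod m k_gt0)) //.
by rewrite -(prednK k_gt0) ltnS leq_divRL ?prednK // mulnC.
Qed.

Lemma count_gtn q n : count (fun r => q < r) (iota 0 n) = n.-1 - q.
Proof.
elim: n => // n IH; rewrite -[n.+1]addn1 iotaD count_cat IH /= addn0.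
by case: ltnP => qn; lia.
Qed.

Lemma count_divn_lt_modn_mulk Q :
  count (fun m => m %/ k < m %% k) (iota 0 (k * Q)) = \sum_(q < Q) (k.-1 - q).
Proof.
elim: Q => [|Q IH]; first by rewrite muln0 big_ord0.
rewrite mulnS addnC iotaD count_cat IH big_ord_recr /= add0n -[k * Q]addn0 iotaDl.
rewrite count_map -count_gtn; congr addn; apply: eq_in_count => r.
rewrite mem_iota add0n /= => rk.
by rewrite mulnC divnMDl // divn_small // addn0 modnMDl modn_small.
Qed.

Lemma count_divn_lt_modn N : k * k.-1 <= N ->
  count (fun m => m %/ k < m %% k) (iota 0 N) = 'C(k, 2).
Proof.
move=> kN; rewrite -(subnKC kN) iotaD count_cat count_divn_lt_modn_mulk.
rewrite sum_sub_ord_bin2 prednK // (@eq_in_count _ _ pred0) ?count_pred0 ?addn0 // => m.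
rewrite mem_iota => /andP[km _]; apply/negbTE; rewrite -leqNgt modn_le_divn //.
Qed.

End DivModCount.

Theorem mainTheorem4 (k : nat) : (2 <= k)%N ->
  [/\ (forall n : int, n <= 0 -> (Fib k n = 0 <-> (qnk n k < rnk n k)%N)),
      (forall n : int, n <= 0 ->
         (Fib k n = 0 <->
          exists q : nat, (q <= k - 2)%N /\ (k * q + q <= `|n| <= k * q + k - 2)%N)),
      (forall n : int, n <= 0 -> (k ^ 2 - k - 1 <= `|n|)%N -> Fib k n != 0)
    & (forall N : nat, (k ^ 2 - k - 1 <= N)%N ->
         count (fun m : nat => Fib k (- (m%:Z)) == 0%R) (iota 0 N) = (k * (k - 1)) %/ 2)%N].
Proof.
move=> k_ge2; have k_gt0 : (0 < k)%N by lia.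
have Fib_eq0P n : n <= 0 -> Fib k n = 0 <-> (qnk n k < rnk n k)%N.
  by move=> n_le0; rewrite Fib_nonpos // Fdown_eq0P.
have sq_k : (k ^ 2 - k - 1 = k * k.-1 - 1)%N by rewrite mulnC -subn1 mulnBl mul1n.
split=> [// | n n_le0 | n n_le0 | N].
- rewrite Fib_eq0P // divn_lt_modnP //.
  split=> [[q] | [q [_]]] /andP[lo hi]; last by exists q; lia.
  by exists q; split; lia.
- rewrite sq_k => big_n; apply/eqP => /(Fib_eq0P n n_le0); apply/negP.
  by rewrite -leqNgt modn_le_divn //; lia.
- rewrite sq_k => big_N.
  have Fib_eq0E m : (Fib k (- m%:Z) == 0) = (m.+1 %/ k < m.+1 %% k)%N.
    by apply/eqP/idP; rewrite Fib_nonpos ?oppr_le0 // abszN absz_nat addn1 Fdown_eq0P.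
  rewrite (eq_count Fib_eq0E) subn1 divn2 -bin2 -(@count_divn_lt_modn k k_gt0 N.+1);
    last by lia.
  by rewrite /= div0n mod0n ltnn add0n -[1%N]addn0 iotaDl count_map.
Qed.
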